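(* Let $n\ge 2$ and $k\ge 1$ be integers and put $t=\lceil n/(k+1)\rceil$. Let $A$ be the $(kt+1)\times n$ matrix with entries $A_{ij}=1$ if $i\le j\le \min(i+t-1,n)$ and $A_{ij}=0$ otherwise, for $1\le i\le kt+1$ and $1\le j\le n$. Then $A$ identifies all $k$-sparse vectors in $\mathbb{R}^n$. The support of every nonzero row of $A$ is a set of consecutive nodes, so $A$ is a feasible measurement matrix both for the line network $L_n$ and for the ring network $C_n$. Consequently $M^{L_n}_{k,n}\le k\lceil n/(k+1)\rceil+1$ and $M^{C_n}_{k,n}\le k\lceil n/(k+1)\rceil+1$.
   Context: Let $G=(V,E)$ be a simple undirected graph with $V=\{1,\dots,n\}$. A vector $x\in\mathbb{R}^n$ is associated with $G$, its $j$-th entry sitting at node $j$. A measurement matrix for $G$ is a matrix $A\in\{0,1\}^{m\times n}$ in which every nonzero row has a support $\{j: A_{ij}=1\}$ that induces a connected subgraph of $G$. A vector is $k$-sparse if it has at most $k$ nonzero entries. A matrix $A$ identifies all $k$-sparse vectors if $Ax_1\neq Ax_2$ for every two distinct $k$-sparse vectors $x_1,x_2$. $M^G_{k,n}$ is the minimum number of rows of a measurement matrix for $G$ that identifies all $k$-sparse vectors. The line network $L_n$ has edges $\{i,i+1\}$ for $1\le i\le n-1$. The ring network $C_n$ (with $n\ge 3$) additionally has the edge $\{n,1\}$. *)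

(* Nodes 1..n are represented by 'I_n (node j+1 <-> ordinal j). *)
From HB Require Import structures.
From mathcomp Require Import all_boot all_order all_algebra.
Set Implicit Arguments. Unset Strict Implicit. Unset Printing Implicit Defensive.
Import Order.TTheory GRing.Theory Num.Theory.

Definition line_graph (n : nat) : rel 'I_n :=
  fun i j => (i.+1 == j :> nat) || (j.+1 == i :> nat).

(* Ring network C_n (meaningful for n >= 3): line edges plus {n,1}. *)
Definition ring_graph (n : nat) : rel 'I_n :=
  fun i j => line_graph i j
    || ((i == 0 :> nat) && (j == n.-1 :> nat))
    || ((j == 0 :> nat) && (i == n.-1 :> nat)).

Definition induces_connected (n : nat) (G : rel 'I_n) (S : {set 'I_n}) : Prop :=
  forall x y, x \in S -> y \in S ->
    connect (fun a b => [&& a \in S, b \in S & G a b]) x y.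

Definition measurement_matrix (n m : nat) (G : rel 'I_n) (A : 'M[bool]_(m, n)) : Prop :=
  forall i : 'I_m, (exists j, A i j) -> induces_connected G [set j | A i j].

Definition meas_apply (R : realFieldType) (m n : nat) (A : 'M[bool]_(m, n))
  (x : 'cV[R]_n) : 'cV[R]_m := map_mx (fun b : bool => (b%:R : R)%R) A *m x.

Definition k_sparse (R : realFieldType) (n k : nat) (x : 'cV[R]_n) : Prop :=
  (#|[set j : 'I_n | x j ord0 != 0%R]| <= k)%N.

Definition identifies (R : realFieldType) (k m n : nat) (A : 'M[bool]_(m, n)) : Prop :=
  forall x1 x2 : 'cV[R]_n, k_sparse k x1 -> k_sparse k x2 -> x1 <> x2 ->
    meas_apply A x1 <> meas_apply A x2.

(* "m = M^G_{k,n}": m is the minimum number of rows of a measurement matrix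
   for G identifying all k-sparse vectors over R. *)
Definition is_M (R : realFieldType) (n : nat) (G : rel 'I_n) (k m : nat) : Prop :=
  (exists A : 'M[bool]_(m, n), measurement_matrix G A /\ identifies R k A) /\
  (forall (m' : nat) (A : 'M[bool]_(m', n)),
      measurement_matrix G A -> identifies R k A -> (m <= m')%N).

(* The matrix of the statement (0-indexed): A i j = 1 iff i <= j <= i+t-1. *)
Definition ceil_div (n d : nat) : nat := (n + d.-1) %/ d.

Definition band_matrix (n k : nat) : 'M[bool]_(k * ceil_div n k.+1 + 1, n) :=
  \matrix_(i, j) ((i <= j)%N && (j < i + ceil_div n k.+1)%N).

(* Write d = x1 - x2 for two k-sparse vectors with A x1 = A x2 and
   extend d by zeros to a sequence z on the naturals.  Row i of A d is the
   window sum z_i + ... + z_(i+t-1), so all windows starting at i <= k t vanish.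
   Comparing consecutive windows shows z is t-periodic on [0, (k+1) t), and the
   last window shows that the t residues sum to 0.  Since (k+1) t >= n, a
   nonzero d has a nonzero residue, hence (sum zero) a second one; each of the
   two residues occurs k+1 times, so d has at least 2(k+1) nonzero entries,
   contradicting |supp d| <= |supp x1| + |supp x2| <= 2k.
   The file proves, in order: the ceiling bounds on t, connectivity of
   intervals (so A is a measurement matrix for the line and the ring), the
   window-sum description of A x, the zero-window periodicity lemmas, the
   support counting lemmas, identification, and finally theorem1. *)
From HB Require Import structures.
From mathcomp Require Import all_boot all_order all_algebra.
From mathcomp Require Import zify.
Set Implicit Arguments. Unset Strict Implicit. Unset Printing Implicit Defensive.
Import Order.TTheory GRing.Theory Num.Theory.

Lemma ceil_div_gt0 n d : (0 < n)%N -> (0 < d)%N -> (0 < ceil_div n d)%N.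
Proof. by move=> n_gt0 d_gt0; rewrite /ceil_div divn_gt0 //; lia. Qed.

Lemma ceil_div_cover n d : (0 < d)%N -> (n <= d * ceil_div n d)%N.
Proof.
move=> d_gt0; rewrite /ceil_div.
have := divn_eq (n + d.-1) d; have := ltn_pmod (n + d.-1) d_gt0; lia.
Qed.

Lemma interval_connected n (G : rel 'I_n) (lo hi : nat) :
  (forall a b : 'I_n, line_graph a b -> G a b) ->
  induces_connected G [set j : 'I_n | (lo <= j)%N && (j < hi)%N].
Proof.
move=> lineG; set S := [set j : 'I_n | _].
set e := fun a b => [&& a \in S, b \in S & G a b].
suff walk d (x y : 'I_n) : x \in S -> y \in S -> y = (x + d)%N :> nat ->
    connect e x y /\ connect e y x.
  move=> x y xS yS; case: (leqP x y) => [xy | yx].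
    by case: (walk (y - x)%N x y xS yS ltac:(lia)).
  by case: (walk (x - y)%N y x yS xS ltac:(lia)).
elim: d x y => [|d IHd] x y xS yS yE.
  by have -> : y = x by apply: val_inj; rewrite /= yE addn0.
have lt_n : (x + d < n)%N by have := ltn_ord y; lia.
pose y' : 'I_n := Ordinal lt_n.
have y'S : y' \in S.
  by move: xS yS; rewrite !inE /= => /andP[? ?] /andP[? ?]; apply/andP; lia.
have [xy' y'x] := IHd x y' xS y'S erefl.
have ey'y : e y' y by rewrite /e y'S yS lineG // /line_graph /= yE addnS eqxx.
have eyy' : e y y' by rewrite /e y'S yS lineG // /line_graph /= yE addnS eqxx orbT.
by split; [exact: connect_trans xy' (connect1 ey'y)
          | exact: connect_trans (connect1 eyy') y'x].
Qed.

Lemma band_measurement_matrix n k (G : rel 'I_n) :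
  (forall a b : 'I_n, line_graph a b -> G a b) ->
  measurement_matrix G (band_matrix n k).
Proof.
move=> lineG i _.
have -> : [set j | band_matrix n k i j] =
          [set j : 'I_n | (i <= j)%N && (j < i + ceil_div n k.+1)%N].
  by apply/setP => j; rewrite !inE mxE.
exact: interval_connected.
Qed.

Lemma is_M_le (R : realFieldType) n (G : rel 'I_n) k m m' (A : 'M[bool]_(m', n)) :
  measurement_matrix G A -> identifies R k A -> is_M R G k m -> (m <= m')%N.
Proof. by move=> mmA idA [_ minimal]; exact: minimal mmA idA. Qed.

Definition xext (V : zmodType) n (x : 'cV[V]_n) (j : nat) : V :=
  oapp (fun o : 'I_n => x o ord0) 0%R (insub j).

Lemma xext_ge (V : zmodType) n (x : 'cV[V]_n) j : (n <= j)%N -> xext x j = 0%R.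
Proof. by move=> n_le_j; rewrite /xext insubN // -leqNgt. Qed.

Lemma xext_val (V : zmodType) n (x : 'cV[V]_n) (o : 'I_n) : xext x o = x o ord0.
Proof. by rewrite /xext valK. Qed.

Lemma band_window_sum (R : realFieldType) n k (x : 'cV[R]_n)
    (i : 'I_(k * ceil_div n k.+1 + 1)) :
  meas_apply (band_matrix n k) x i ord0 =
  (\sum_(i <= j < i + ceil_div n k.+1) xext x j)%R.
Proof.
set t := ceil_div n k.+1; rewrite /meas_apply !mxE.
pose F j : R := ((((i <= j)%N && (j < i + t)%N) : nat)%:R * xext x j)%R.
have F_out j : (j < i)%N || (i + t <= j)%N || (n <= j)%N -> F j = 0%R.
  case/orP=> [/orP[j_lt | le_j] | n_le_j]; rewrite /F.
  - by rewrite leqNgt j_lt mul0r.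
  - by rewrite ltnNge le_j andbF mul0r.
  - by rewrite xext_ge ?mulr0.
transitivity (\sum_(0 <= j < n + (i + t)) F j)%R.
  rewrite (big_cat_nat _ (leq_addr (i + t) n)) //= big_mkord.
  rewrite [X in (_ = _ + X)%R]big1_seq ?addr0 => [|j /andP[_]]; last first.
    by rewrite mem_index_iota => /andP[n_le_j _]; rewrite F_out ?n_le_j ?orbT.
  by apply: eq_bigr => j _; rewrite !mxE /F xext_val.
rewrite (@big_cat_nat _ _ _ i) ?leq_addr //; last by lia.
rewrite (@big_cat_nat _ _ _ (i + t) i) ?leq_addr ?leq_addl //=.
rewrite big1_seq ?add0r => [|j /andP[_]]; last first.
  by rewrite mem_index_iota => /andP[_ j_lt]; rewrite F_out ?j_lt.
rewrite [X in (_ + X)%R]big1_seq ?addr0 => [|j /andP[_]]; last first.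
  by rewrite mem_index_iota => /andP[le_j _]; rewrite F_out ?le_j ?orbT.
by apply: eq_big_nat => j j_in; rewrite /F j_in mul1r.
Qed.

Section ZeroWindows.
Variables (V : zmodType) (z : nat -> V) (t k : nat).
Hypothesis t_gt0 : (0 < t)%N.
Hypothesis windows0 : forall i, (i <= k * t)%N -> (\sum_(i <= j < i + t) z j)%R = 0%R.

Lemma zero_windows_shift i : (i < k * t)%N -> z i = z (i + t).
Proof.
move=> i_lt; set inner := (\sum_(i.+1 <= j < i + t) z j)%R.
have cur : (z i + inner = 0)%R.
  by rewrite -(windows0 (ltnW i_lt)) [RHS]big_ltn // -[X in (X < _)%N]addn0 ltn_add2l.
have next : (inner + z (i + t) = 0)%R.
  by rewrite -(windows0 i_lt) addSn [RHS]big_nat_recr //= -[X in (X < _)%N]addn0 ltn_add2l.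
by rewrite -[z i]addr0 -next addrA cur add0r.
Qed.

Lemma zero_windows_periodic r j : (r < t)%N -> (j <= k)%N -> z (r + j * t) = z r.
Proof.
move=> r_lt; elim: j => [|j IHj] j_le; first by rewrite mul0n addn0.
have jt_le : (j.+1 * t <= k * t)%N by rewrite leq_mul2r j_le orbT.
rewrite mulSn addnCA addnC -zero_windows_shift ?IHj //; rewrite mulSn in jt_le; lia.
Qed.

Lemma zero_windows_residues : (\sum_(0 <= r < t) z r)%R = 0%R.
Proof.
have := windows0 (leqnn (k * t)).
rewrite -{1}(add0n (k * t)) big_addn addKn => windowk; apply: etrans windowk.
by apply: eq_big_nat => r /andP[_ r_lt]; rewrite zero_windows_periodic.
Qed.

End ZeroWindows.

Lemma sum0_other_nonzero (V : zmodType) (F : nat -> V) t r0 :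
  (r0 < t)%N -> (\sum_(0 <= r < t) F r)%R = 0%R -> F r0 != 0%R ->
  exists r1, [/\ (r1 < t)%N, r1 != r0 & F r1 != 0%R].
Proof.
move=> r0_lt sum0 Fr0.
have [[r1 r1_in /andP[r1_r0 Fr1]] | none] :=
  @hasP _ (fun r => (r != r0) && (F r != 0%R)) (index_iota 0 t).
  by exists r1; split=> //; move: r1_in; rewrite mem_index_iota.
move/eqP: Fr0; case; rewrite -sum0 (bigD1_seq r0) ?mem_index_iota ?iota_uniq //=.
rewrite big1_seq ?addr0 // => r /andP[r_r0 r_in].
by apply/eqP/negPn/negP => Fr; apply: none; exists r => //; rewrite r_r0.
Qed.

Definition support (V : zmodType) n (x : 'cV[V]_n) : {set 'I_n} :=
  [set j | x j ord0 != 0%R].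

Section PeriodicSupport.
Variables (V : zmodType) (n t k : nat) (d : 'cV[V]_n).
Hypothesis t_gt0 : (0 < t)%N.
Hypothesis d_periodic :
  forall r j, (r < t)%N -> (j <= k)%N -> xext d (r + j * t) = xext d r.

Lemma nonzero_residue : (n <= k.+1 * t)%N -> d != 0%R ->
  exists2 r0, (r0 < t)%N & xext d r0 != 0%R.
Proof.
move=> cover d_neq0.
have /existsP[j0 dj0] : [exists j0 : 'I_n, d j0 ord0 != 0%R].
  apply: contraR d_neq0 => /existsPn all0; apply/eqP/matrixP => j c.
  by rewrite (ord1 c) mxE; apply/eqP/negPn/all0.
have quot_le : (j0 %/ t <= k)%N.
  by rewrite -ltnS ltn_divLR //; exact: leq_trans (ltn_ord j0) cover.
exists (j0 %% t); first exact: ltn_pmod.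
by rewrite -(d_periodic (ltn_pmod j0 t_gt0) quot_le) addnC -divn_eq xext_val.
Qed.

(* Two distinct nonzero residues each recur in all k+1 periods, giving
   2(k+1) distinct nodes in the support. *)
Lemma two_residues_support r0 r1 : (r0 < t)%N -> (r1 < t)%N -> r0 != r1 ->
  xext d r0 != 0%R -> xext d r1 != 0%R -> (2 * k.+1 <= #|support d|)%N.
Proof.
move=> r0_lt r1_lt r0_r1 dr0 dr1.
pose res (b : bool) := if b then r1 else r0.
have res_lt b : (res b < t)%N by case: b.
pose pos (p : bool * 'I_k.+1) := (res p.1 + p.2 * t)%N.
have pos_nz p : xext d (pos p) != 0%R.
  by case: p => [[] j]; rewrite /pos d_periodic // -ltnS.
have pos_lt p : (pos p < n)%N.
  by rewrite ltnNge; apply: contra (pos_nz p) => /xext_ge ->.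
have pos_inj : injective pos.
  move=> [b j] [b' j'] /= E.
  have Eres : res b = res b'.
    by have := congr1 (modn^~ t) E; rewrite /pos /= !(addnC (res _)) !modnMDl !modn_small.
  have Ej : j = j'.
    apply: val_inj; have := congr1 (divn^~ t) E.
    by rewrite /pos /= !(addnC (res _)) !divnMDl // !divn_small ?addn0.
  by rewrite Ej; case: b b' Eres {E} => [] [] //= Eres; rewrite Eres eqxx in r0_r1.
pose f p : 'I_n := Ordinal (pos_lt p).
have f_inj : injective f by move=> p q /(congr1 val) /pos_inj.
have -> : (2 * k.+1 = #|f @: [set: bool * 'I_k.+1]|)%N.
  by rewrite card_imset // cardsT card_prod card_bool card_ord.
apply/subset_leq_card/subsetP => _ /imsetP[p _ ->].
by rewrite inE -xext_val; exact: pos_nz.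
Qed.

End PeriodicSupport.

Lemma sparse_sub_support (R : realFieldType) n k (x1 x2 : 'cV[R]_n) :
  k_sparse k x1 -> k_sparse k x2 -> (#|support (x1 - x2)| <= k + k)%N.
Proof.
move=> sp1 sp2.
have sub : support (x1 - x2) \subset support x1 :|: support x2.
  apply/subsetP => j; rewrite !inE !mxE.
  by case: (x1 j ord0 =P 0%R) => [-> | //]; rewrite sub0r oppr_eq0.
apply: leq_trans (subset_leq_card sub) _.
by rewrite cardsU; apply: leq_trans (leq_subr _ _) (leq_add sp1 sp2).
Qed.

Lemma band_identifies (R : realFieldType) n k : (0 < n)%N ->
  identifies R k (band_matrix n k).
Proof.
move=> n_gt0 x1 x2 sp1 sp2 x1_neq_x2 same_meas.
set t := ceil_div n k.+1; set d := (x1 - x2)%R.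
have t_gt0 : (0 < t)%N by exact: ceil_div_gt0.
have d_neq0 : d != 0%R by rewrite subr_eq0; apply/eqP.
have Ad0 : meas_apply (band_matrix n k) d = 0%R.
  by rewrite /meas_apply mulmxBr -!/(meas_apply _ _) same_meas subrr.
have windows0 i : (i <= k * t)%N -> (\sum_(i <= j < i + t) xext d j)%R = 0%R.
  move=> i_le; have i_lt : (i < k * t + 1)%N by rewrite addn1 ltnS.
  by rewrite -(band_window_sum d (Ordinal i_lt)) Ad0 mxE.
have periodic := zero_windows_periodic t_gt0 windows0.
have [r0 r0_lt dr0] :=
  nonzero_residue t_gt0 periodic (ceil_div_cover n (ltn0Sn k)) d_neq0.
have [r1 [r1_lt r1_r0 dr1]] :=
  sum0_other_nonzero r0_lt (zero_windows_residues t_gt0 windows0) dr0.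
rewrite eq_sym in r1_r0.
have := two_residues_support t_gt0 periodic r0_lt r1_lt r1_r0 dr0 dr1.
have := sparse_sub_support sp1 sp2; rewrite -/d; lia.
Qed.

Theorem theorem1 (R : realFieldType) (n k : nat) (hn : (2 <= n)%N) (hk : (1 <= k)%N) :
  let t := ceil_div n k.+1 in
  identifies R k (band_matrix n k) /\
  measurement_matrix (@line_graph n) (band_matrix n k) /\
  ((3 <= n)%N -> measurement_matrix (@ring_graph n) (band_matrix n k)) /\
  (forall m, is_M R (@line_graph n) k m -> (m <= k * t + 1)%N) /\
  ((3 <= n)%N -> forall m, is_M R (@ring_graph n) k m -> (m <= k * t + 1)%N).
Proof.
move=> t.
have ident : identifies R k (band_matrix n k) by apply: band_identifies; lia.
have line_mm : measurement_matrix (@line_graph n) (band_matrix n k).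
  exact: band_measurement_matrix.
have ring_mm : measurement_matrix (@ring_graph n) (band_matrix n k).
  by apply: band_measurement_matrix => a b ab; rewrite /ring_graph ab.
split=> //; split=> //; split=> //; split=> [m | _ m]; exact: is_M_le ident.
Qed.
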